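(* Let $n\ge1$ and $d\ge1$. The space $V^n_d$ of divergence-free vector fields in $F^n_d$ has a basis consisting of (i) the $n\dim P^{n-1}_d$ vector monomials $p_{i,m}=\xi^m\hat e_i$ with $1\le i\le n$, $m\in\mathbb{N}^n$, $|m|=d$ and $m_i=0$; and (ii) the $(n-1)\dim P^n_{d-1}$ vector fields $$v_{i,m}=\xi^m\big[(1+m_{i+1})\,\xi_i\hat e_i-(1+m_i)\,\xi_{i+1}\hat e_{i+1}\big],\qquad 1\le i\le n-1,\ m\in\mathbb{N}^n,\ |m|=d-1 .$$
   Context: For $\xi\in\mathbb{R}^n$ and $m\in\mathbb{N}^n$, $\xi^m=\xi_1^{m_1}\cdots\xi_n^{m_n}$ and $|m|=\sum_i m_i$. $P^n_d$ is the space of real homogeneous polynomials of degree $d$ in $n$ variables (so $\dim P^n_d=\binom{n+d-1}{d}$). $F^n_d$ is the space of vector fields $h:\mathbb{R}^n\to\mathbb{R}^n$ each of whose components lies in $P^n_d$, and $V^n_d=\{v\in F^n_d:\nabla\cdot v=0\}$. $\hat e_i$ is the $i$-th standard basis vector. *)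

From HB Require Import structures.
From mathcomp Require Import all_boot all_order all_algebra.
From mathcomp.multinomials Require Import mpoly.
Set Implicit Arguments. Unset Strict Implicit. Unset Printing Implicit Defensive.
Import Order.TTheory GRing.Theory Num.Theory.
Local Open Scope ring_scope.

Definition vfield (R : realFieldType) (n : nat) := 'I_n -> {mpoly R[n]}.

Definition inF (R : realFieldType) n d (h : vfield R n) : Prop :=
  forall j : 'I_n, h j \is d.-homog.

Definition divergence (R : realFieldType) n (h : vfield R n) : {mpoly R[n]} :=
  \sum_(j < n) (h j)^`M(j).

Definition inV (R : realFieldType) n d (h : vfield R n) : Prop :=
  inF d h /\ divergence h = 0.

Definition lincomb (R : realFieldType) n (I : finType) (c : I -> R)
  (B : I -> vfield R n) : vfield R n :=
  fun j => \sum_(k : I) c k *: B k j.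

Definition is_basis_of (R : realFieldType) n (P : vfield R n -> Prop)
  (I : finType) (B : I -> vfield R n) : Prop :=
  [/\ forall k, P (B k),
      forall c : I -> R, (forall j, lincomb c B j = 0) -> forall k, c k = 0
    & forall h, P h -> exists c : I -> R, forall j, h j = lincomb c B j].

Definition Ip n d := {x : 'I_n * 'X_{1..n < d.+1} |
  (mdeg (bmnm x.2) == d) && (bmnm x.2 x.1 == 0%N)}.
(* index set (ii): triples (i, i+1, m), |m| = d-1 (i ranges over 1..n-1) *)
Definition Iv n d := {x : 'I_n * 'I_n * 'X_{1..n < d} |
  (val x.1.2 == (val x.1.1).+1) && (mdeg (bmnm x.2) == d.-1)}.

Definition p_field (R : realFieldType) n (i : 'I_n) (m : 'X_{1..n}) : vfield R n :=
  fun j => if j == i then 'X_[m] else 0.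

(* v_{i,m} = xi^m [ (1+m_{i+1}) xi_i e_i - (1+m_i) xi_{i+1} e_{i+1} ],  i' = i+1 *)
Definition v_field (R : realFieldType) n (i i' : 'I_n) (m : 'X_{1..n}) : vfield R n :=
  fun j => if j == i then (1 + m i')%:R *: ('X_[m] * 'X_i)
           else if j == i' then - ((1 + m i)%:R *: ('X_[m] * 'X_i'))
           else 0.

Definition basis_family (R : realFieldType) n d (k : (Ip n d + Iv n d)%type)
  : vfield R n :=
  match k with
  | inl x => p_field R (val x).1 (bmnm (val x).2)
  | inr y => v_field R (val y).1.1 (val y).1.2 (bmnm (val y).2)
  end.

(* Compare coefficients.  The monomial fields p_{i,m} hit exactly the coefficients
   of h_i at exponents M with M_i = 0, while v_{i,m} hits the coefficient of h_i at
   m + e_i and that of h_{i+1} at m + e_{i+1}.  Independence follows by induction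
   on i, since v_{i,m} is the only field reaching h_i at m + e_i that has not yet
   been shown to have coefficient zero.  For spanning, write a_k(N) for the
   coefficient of h_k at N + e_k; the coefficient of the divergence at N is
   S_n(N), where S_i(N) = sum_{k<i} (1 + N_k) a_k(N), so divergence-free fields
   are reproduced by taking the coefficient of v_{i,N} to be
   S_{i+1}(N) / ((1 + N_i) (1 + N_{i+1})): the boundary terms vanish because
   S_0 = 0 = S_n. *)
From HB Require Import structures.
From mathcomp Require Import all_boot all_order all_algebra.
From mathcomp.multinomials Require Import mpoly.
From mathcomp Require Import ring.
Set Implicit Arguments. Unset Strict Implicit. Unset Printing Implicit Defensive.
Import Order.TTheory GRing.Theory Num.Theory.
Local Open Scope ring_scope.

Lemma natr_add1_neq0 (R : numDomainType) (k : nat) : 1 + k%:R != 0 :> R.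
Proof. by rewrite addrC natr1 pnatr_eq0. Qed.

Section BasisFields.
Variables (R : realFieldType) (n : nat).

Lemma mcoeff_p_field (i j : 'I_n) (m M : 'X_{1..n}) :
  (p_field R i m j)@_M = ((j == i) && (m == M))%:R.
Proof.
rewrite /p_field; case: (j == i) => /=; first by rewrite mcoeffX.
by rewrite mcoeff0.
Qed.

Lemma mcoeff_v_field (i i' j : 'I_n) (N M : 'X_{1..n}) : i != i' ->
  (v_field R i i' N j)@_M =
  (if (i == j) && ((N + U_(i))%MM == M) then (1 + N i')%:R else 0)
  - (if (i' == j) && ((N + U_(i'))%MM == M) then (1 + N i)%:R else 0).
Proof.
move=> neq_ii'; rewrite /v_field.
have [->|neq_ji] := eqVneq j i.
  rewrite [i' == i]eq_sym (negbTE neq_ii') /= subr0 mcoeffZ -mpolyXD mcoeffX.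
  by case: eqP; rewrite ?mulr1 ?mulr0.
rewrite /= sub0r; have [eji'|neq_ji'] := eqVneq j i'.
  subst j; rewrite mcoeffN mcoeffZ -mpolyXD mcoeffX.
  by case: eqP; rewrite ?mulr1 ?mulr0 ?oppr0.
by rewrite /= oppr0 mcoeff0.
Qed.

End BasisFields.

Section IndexSets.
Variables (n d : nat).

Lemma Ip_mdeg (x : Ip n d) : mdeg (bmnm (val x).2) = d.
Proof. by case: x => [[i m] /= /andP[/eqP]]. Qed.

Lemma Ip_coord0 (x : Ip n d) : bmnm (val x).2 (val x).1 = 0%N.
Proof. by case: x => [[i m] /= /andP[_ /eqP]]. Qed.

Lemma Iv_mdeg (y : Iv n d) : mdeg (bmnm (val y).2) = d.-1.
Proof. by case: y => [[[i i'] m] /= /andP[_ /eqP]]. Qed.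

Lemma Iv_succ (y : Iv n d) : val (val y).1.2 = (val (val y).1.1).+1.
Proof. by case: y => [[[i i'] m] /= /andP[/eqP]]. Qed.

Lemma Iv_neq (y : Iv n d) : (val y).1.1 != (val y).1.2.
Proof. by rewrite -(inj_eq val_inj) Iv_succ neq_ltn ltnSn. Qed.

Lemma Ip_inj (x1 x2 : Ip n d) :
  (val x1).1 = (val x2).1 -> bmnm (val x1).2 = bmnm (val x2).2 -> x1 = x2.
Proof.
case: x1 x2 => [[i1 m1] p1] [[i2 m2] p2] /= ei em.
have {}em : m1 = m2 by apply: val_inj.
by subst i2 m2; rewrite (bool_irrelevance p1 p2).
Qed.

Lemma Iv_inj (y1 y2 : Iv n d) :
  (val y1).1.1 = (val y2).1.1 -> bmnm (val y1).2 = bmnm (val y2).2 -> y1 = y2.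
Proof.
move=> e1 e2; have e3 : (val y1).1.2 = (val y2).1.2.
  by apply: val_inj; rewrite !Iv_succ e1.
move: e1 e2 e3; case: y1 y2 => [[[i1 i1'] m1] p1] [[[i2 i2'] m2] p2] /= ei em ei'.
have {}em : m1 = m2 by apply: val_inj.
by subst i2 i2' m2; rewrite (bool_irrelevance p1 p2).
Qed.

Lemma Ip_exists (j : 'I_n) (M : 'X_{1..n}) : mdeg M = d -> M j = 0%N ->
  exists x : Ip n d, (val x).1 = j /\ bmnm (val x).2 = M.
Proof.
move=> degM Mj; have bM : (mdeg M < d.+1)%N by rewrite degM.
have px : (mdeg (bmnm (BMultinom bM)) == d) && (bmnm (BMultinom bM) j == 0%N).
  by rewrite /= degM Mj !eqxx.
by exists (exist _ (j, BMultinom bM) px).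
Qed.

Lemma Iv_exists (i : nat) (N : 'X_{1..n}) :
  (0 < d)%N -> (i.+1 < n)%N -> mdeg N = d.-1 ->
  exists y : Iv n d, [/\ val (val y).1.1 = i, val (val y).1.2 = i.+1
                       & bmnm (val y).2 = N].
Proof.
move=> d_gt0 lt_i1n degN; have bN : (mdeg N < d)%N by rewrite degN prednK.
have lt_in : (i < n)%N by apply: ltn_trans lt_i1n.
have py : (val (Ordinal lt_i1n) == (val (Ordinal lt_in)).+1)
          && (mdeg (bmnm (BMultinom bN)) == d.-1) by rewrite /= degN !eqxx.
by exists (exist _ ((Ordinal lt_in, Ordinal lt_i1n), BMultinom bN) py).
Qed.

End IndexSets.

Section Family.
Variables (R : realFieldType) (n d : nat).
Local Notation B := (@basis_family R n d).
Local Notation Ib := (Ip n d + Iv n d)%type.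

Lemma mcoeff_lincomb (c : Ib -> R) (j : 'I_n) (M : 'X_{1..n}) :
  (lincomb c B j)@_M =
    \sum_(x : Ip n d | ((val x).1 == j) && (bmnm (val x).2 == M)) c (inl x)
  + (\sum_(y : Iv n d | ((val y).1.1 == j)
                        && ((bmnm (val y).2 + U_((val y).1.1))%MM == M))
       c (inr y) * (1 + bmnm (val y).2 (val y).1.2)%:R
   - \sum_(y : Iv n d | ((val y).1.2 == j)
                        && ((bmnm (val y).2 + U_((val y).1.2))%MM == M))
       c (inr y) * (1 + bmnm (val y).2 (val y).1.1)%:R).
Proof.
rewrite /lincomb raddf_sum big_sumType /=; congr (_ + _).
  rewrite [RHS]big_mkcond /=; apply: eq_bigr => x _.
  by rewrite mcoeffZ mcoeff_p_field [j == _]eq_sym; case: ifP; rewrite ?mulr1 ?mulr0.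
rewrite [X in _ = X - _]big_mkcond [X in _ = _ - X]big_mkcond -sumrB.
apply: eq_bigr => y _; rewrite mcoeffZ mcoeff_v_field ?Iv_neq // mulrBr.
by congr (_ - _); case: ifP; rewrite ?mulr0.
Qed.

Lemma basis_family_homog : (0 < d)%N -> forall k, inF d (B k).
Proof.
move=> d_gt0 [x|y] j /=.
  rewrite /p_field; case: ifP => _; last exact: dhomog0.
  by rewrite dhomogX; apply/eqP; apply: Ip_mdeg.
have degU k : mdeg (bmnm (val y).2 + U_(k))%MM = d.
  by rewrite mdegD mdeg1 Iv_mdeg addn1 prednK.
rewrite /v_field; case: ifP => _.
  by apply: dhomogZ; rewrite -mpolyXD dhomogX; apply/eqP; apply: degU.
case: ifP => _; last exact: dhomog0.
by rewrite dhomogN; apply: dhomogZ; rewrite -mpolyXD dhomogX; apply/eqP; apply: degU.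
Qed.

Lemma divergence_basis_family k : divergence (B k) = 0.
Proof.
case: k => [x|y] /=.
  rewrite /divergence big1 // => j _; rewrite /p_field.
  case: eqP => [->|_]; last exact: mderiv0.
  by rewrite mderivX Ip_coord0 scale0r.
have neq_ii' := Iv_neq y.
move: neq_ii'; set i := (val y).1.1; set i' := (val y).1.2.
set N := bmnm (val y).2 => neq_ii'.
rewrite /divergence (bigD1 i) // (bigD1 i') 1?eq_sym //= big1 ?addr0; last first.
  by move=> j /andP[nji nji']; rewrite /v_field (negbTE nji) (negbTE nji') mderiv0.
rewrite /v_field eqxx [i' == i]eq_sym (negbTE neq_ii') eqxx.
rewrite mderivN !mderivZ -!mpolyXD !mderivX !mnmDE !mnm1E !eqxx !addmK.
rewrite ?[i' == i]eq_sym ?(negbTE neq_ii') !addn1 !scalerA -scaleNr -scalerDl.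
by rewrite -!natrM !add1n mulnC subrr scale0r.
Qed.

Lemma Ip_pred1 (x : Ip n d) :
  [pred x' : Ip n d | ((val x').1 == (val x).1) && (bmnm (val x').2 == bmnm (val x).2)]
  =1 pred1 x.
Proof.
move=> x' /=; apply/idP/eqP => [/andP[/eqP e1 /eqP e2]|->]; last by rewrite !eqxx.
exact: Ip_inj.
Qed.

Lemma lincomb_eq0_Ip (c : Ib -> R) : (forall j, lincomb c B j = 0) ->
  forall x, c (inl x) = 0.
Proof.
move=> c0 x; have := mcoeff_lincomb c (val x).1 (val x).2.
rewrite c0 mcoeff0 (big_pred1 x (Ip_pred1 x)) !big1 ?subr0 ?addr0 //;
  move=> y /andP[/eqP ei /eqP eM];
  by move: (Ip_coord0 x); rewrite -eM -ei mnmDE mnm1E eqxx addn1.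
Qed.

(* At the coefficient of h_i at m + e_i only p-fields (already zero), v_{i,m} and
   fields v_{i-1,m'} contribute. *)
Lemma lincomb_eq0_Iv_step (c : Ib -> R) (y : Iv n d) :
  (forall j, lincomb c B j = 0) ->
  (forall y' : Iv n d, (val y').1.2 = (val y).1.1 -> c (inr y') = 0) ->
  c (inr y) = 0.
Proof.
move=> c0 IH; have := mcoeff_lincomb c (val y).1.1 (bmnm (val y).2 + U_((val y).1.1))%MM.
rewrite c0 mcoeff0 big1; last first.
  move=> x /andP[/eqP ei /eqP eM].
  by move: (Ip_coord0 x); rewrite eM ei mnmDE mnm1E eqxx addn1.
rewrite [X in _ - X]big1; last by move=> y' /andP[/eqP e _]; rewrite IH ?mul0r.
rewrite (big_pred1 y); last first.
  move=> y' /=; apply/idP/eqP => [/andP[/eqP ei /eqP eM]|->]; last by rewrite !eqxx.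
  by apply: Iv_inj => //; rewrite ei in eM; apply: (can_inj (addmK _)) eM.
rewrite add0r subr0 => /esym/eqP; rewrite mulf_eq0 pnatr_eq0 add1n orbF.
by move/eqP.
Qed.

Lemma lincomb_eq0_basis_family (c : Ib -> R) :
  (forall j, lincomb c B j = 0) -> forall k, c k = 0.
Proof.
move=> c0 [x|y]; first exact: lincomb_eq0_Ip.
suff: forall i (y : Iv n d), val (val y).1.1 = i -> c (inr y) = 0 by apply.
elim=> [|i IHi] {}y ey; apply: lincomb_eq0_Iv_step => // y' e.
  by move: (Iv_succ y'); rewrite e ey.
by apply: IHi; move: (Iv_succ y'); rewrite e ey => -[].
Qed.

Lemma sum_Iv_fst_shift (F : Iv n d -> R) (K : R) (j : 'I_n) (N : 'X_{1..n}) :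
  (0 < d)%N -> mdeg N = d.-1 ->
  (forall y : Iv n d, (val y).1.1 = j -> bmnm (val y).2 = N -> F y = K) ->
  \sum_(y : Iv n d | ((val y).1.1 == j)
                     && ((bmnm (val y).2 + U_((val y).1.1))%MM == (N + U_(j))%MM)) F y
  = if (j.+1 < n)%N then K else 0.
Proof.
move=> d_gt0 degN FK; case: ifP => lt_j1n.
  have [y0 [e1 _ e3]] := Iv_exists d_gt0 lt_j1n degN.
  have {}e1 : (val y0).1.1 = j by apply: val_inj.
  rewrite (big_pred1 y0) ?FK // => y /=.
  apply/idP/eqP => [/andP[/eqP f1 /eqP f]|->]; last by rewrite e1 e3 !eqxx.
  rewrite f1 in f; apply: Iv_inj; first by rewrite f1 e1.
  by rewrite e3; apply: (can_inj (addmK _)) f.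
rewrite big1 // => y /andP[/eqP f1 _]; move: (Iv_succ y) (ltn_ord (val y).1.2).
by rewrite f1 => ->; rewrite lt_j1n.
Qed.

Lemma sum_Iv_snd_shift (F : Iv n d -> R) (K : R) (j : 'I_n) (N : 'X_{1..n}) :
  (0 < d)%N -> mdeg N = d.-1 ->
  (forall y : Iv n d, (val y).1.2 = j -> bmnm (val y).2 = N -> F y = K) ->
  \sum_(y : Iv n d | ((val y).1.2 == j)
                     && ((bmnm (val y).2 + U_((val y).1.2))%MM == (N + U_(j))%MM)) F y
  = if (0 < j)%N then K else 0.
Proof.
move=> d_gt0 degN FK; case: ifP => j_gt0.
  have lt_jn : ((val j).-1.+1 < n)%N by rewrite prednK ?ltn_ord.
  have [y0 [_ e2 e3]] := Iv_exists d_gt0 lt_jn degN.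
  have {}e2 : (val y0).1.2 = j by apply: val_inj; rewrite e2 prednK.
  rewrite (big_pred1 y0) ?FK // => y /=.
  apply/idP/eqP => [/andP[/eqP f1 /eqP f]|->]; last by rewrite e2 e3 !eqxx.
  rewrite f1 in f; apply: Iv_inj.
    by apply: val_inj; apply: succn_inj; rewrite -!Iv_succ f1 e2.
  by rewrite e3; apply: (can_inj (addmK _)) f.
by rewrite big1 // => y /andP[/eqP f1 _]; move: (Iv_succ y) j_gt0; rewrite f1 => ->.
Qed.

Section Span.
Variable h : vfield R n.
Hypothesis hV : inV d h.
Hypothesis d_gt0 : (0 < d)%N.

Let shift_coef (k : 'I_n) (N : 'X_{1..n}) := (h k)@_(N + U_(k))%MM.

Definition div_partial (N : 'X_{1..n}) (i : nat) :=
  \sum_(k < n | (k < i)%N) (1 + N k)%:R * shift_coef k N.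

Lemma div_partial0 N : div_partial N 0 = 0.
Proof. by rewrite /div_partial big1. Qed.

Lemma div_partialS N (j : 'I_n) :
  div_partial N j.+1 = div_partial N j + (1 + N j)%:R * shift_coef j N.
Proof.
rewrite /div_partial (bigD1 j) ?ltnSn //= addrC; congr (_ + _).
by apply: eq_bigl => k; rewrite ltnS ltn_neqAle andbC.
Qed.

Lemma div_partial_n N : div_partial N n = 0.
Proof.
have := congr1 (mcoeff N) hV.2; rewrite mcoeff0 /divergence raddf_sum => <-.
rewrite /div_partial; under eq_bigl do rewrite ltn_ord.
by apply: eq_bigr => k _; rewrite /= mcoeff_deriv mulr_natl add1n.
Qed.

Definition span_coef (k : Ib) : R :=
  match k with
  | inl x => (h (val x).1)@_(bmnm (val x).2)
  | inr y => div_partial (bmnm (val y).2) (val y).1.2 /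
       ((1 + bmnm (val y).2 (val y).1.1)%:R * (1 + bmnm (val y).2 (val y).1.2)%:R)
  end.

Lemma span_coef_off_degree (j : 'I_n) (M : 'X_{1..n}) : mdeg M != d ->
  (lincomb span_coef B j)@_M = 0.
Proof.
move=> degM; rewrite mcoeff_lincomb !big1 ?subr0 ?addr0 // => ? /andP[_ /eqP eM];
  by case/eqP: degM; rewrite -eM ?Ip_mdeg // mdegD mdeg1 Iv_mdeg addn1 prednK.
Qed.

Lemma span_coef_coord0 (j : 'I_n) (M : 'X_{1..n}) : mdeg M = d -> M j = 0%N ->
  (lincomb span_coef B j)@_M = (h j)@_M.
Proof.
move=> degM Mj; have [x0 [e1 e2]] := Ip_exists degM Mj.
rewrite mcoeff_lincomb (big_pred1 x0); last by move=> x; rewrite -e1 -e2; apply: Ip_pred1.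
rewrite !big1 ?subr0 ?addr0 /= ?e1 ?e2 // => y /andP[/eqP ei /eqP eM];
  by move: Mj; rewrite -eM ei mnmDE mnm1E eqxx addn1.
Qed.

Lemma span_coef_shift (j : 'I_n) (N : 'X_{1..n}) : mdeg N = d.-1 ->
  (lincomb span_coef B j)@_(N + U_(j)) = (h j)@_(N + U_(j)).
Proof.
move=> degN; rewrite mcoeff_lincomb big1 ?add0r; last first.
  move=> x /andP[/eqP ei /eqP eM].
  by move: (Ip_coord0 x); rewrite eM ei mnmDE mnm1E eqxx addn1.
rewrite (sum_Iv_fst_shift (K := div_partial N j.+1 / (1 + N j)%:R) d_gt0 degN); last first.
  move=> y ei eN; rewrite /= eN ei Iv_succ ei; field.
  by rewrite !natr_add1_neq0.
rewrite (sum_Iv_snd_shift (K := div_partial N j / (1 + N j)%:R) d_gt0 degN); last first.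
  by move=> y ei eN; rewrite /= eN ei; field; rewrite !natr_add1_neq0.
have -> : (if (j.+1 < n)%N then div_partial N j.+1 / (1 + N j)%:R else 0)
          = div_partial N j.+1 / (1 + N j)%:R.
  case: ifP => // lt_j1n; rewrite (_ : j.+1 = n) ?div_partial_n ?mul0r //.
  by apply/eqP; rewrite eqn_leq ltn_ord leqNgt lt_j1n.
have -> : (if (0 < j)%N then div_partial N j / (1 + N j)%:R else 0)
          = div_partial N j / (1 + N j)%:R.
  by case: ifP => //; rewrite lt0n => /negbFE/eqP ->; rewrite div_partial0 mul0r.
rewrite div_partialS /shift_coef; field; exact: natr_add1_neq0.
Qed.

Lemma lincomb_span_coef (j : 'I_n) : h j = lincomb span_coef B j.
Proof.
apply/mpolyP => M; have [degM|degM] := eqVneq (mdeg M) d; last first.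
  by rewrite span_coef_off_degree // (dhomog_nemf_coeff (hV.1 j) degM).
have [Mj|Mj] := eqVneq (M j) 0%N; first by rewrite span_coef_coord0.
pose N := (M - U_(j))%MM.
have eM : M = (N + U_(j))%MM.
  rewrite submK //; apply/mnm_lepP => k; rewrite mnm1E.
  by case: eqP => [<-|]; rewrite ?lt0n.
have degN : mdeg N = d.-1 by move: degM; rewrite eM mdegD mdeg1 addn1 => <-.
by rewrite eM span_coef_shift.
Qed.

End Span.

End Family.

Theorem lemma1 (R : realFieldType) (n d : nat) (hn : (1 <= n)%N) (hd : (1 <= d)%N) :
  is_basis_of (@inV R n d) (@basis_family R n d).
Proof.
split.
- by move=> k; split; [apply: basis_family_homog | apply: divergence_basis_family].
- exact: lincomb_eq0_basis_family.
- by move=> h hV; exists (span_coef h); apply: lincomb_span_coef.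
Qed.
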